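(* Let $a,b,c$ be nonnegative integers such that $s=a+b+c-d$ is positive. Then in $\mathcal{B}_d$: $$f^{(a)}\binom{H_2}{b}e^{(c)}=\sum_{k=s}^{\min(a,c)}(-1)^{k-s}\binom{k-1}{s-1}\binom{b+k}{k}f^{(a-k)}\binom{H_2}{b+k}e^{(c-k)},$$ $$e^{(a)}\binom{H_1}{b}f^{(c)}=\sum_{k=s}^{\min(a,c)}(-1)^{k-s}\binom{k-1}{s-1}\binom{b+k}{k}e^{(a-k)}\binom{H_1}{b+k}f^{(c-k)}$$ (an empty sum being $0$).
   Context: Fix an integer $d\ge 0$. $\mathcal{B}_d$ is the associative $\mathbb{Q}$-algebra with $1$ generated by $e,f,H_1,H_2$ subject to the relations $H_1H_2=H_2H_1$, $H_1e-eH_1=e$, $H_1f-fH_1=-f$, $H_2e-eH_2=-e$, $H_2f-fH_2=f$, $ef-fe=H_1-H_2$, $H_1+H_2=d$, and $H_1(H_1-1)\cdots(H_1-d)=0$. For an element $T$ and integer $m\ge 0$, $T^{(m)}=T^m/m!$ and $\binom{T}{m}=T(T-1)\cdots(T-m+1)/m!$; both are defined to be $0$ for negative $m$. *)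

From HB Require Import structures.
From mathcomp Require Import all_boot all_order all_algebra.
Set Implicit Arguments. Unset Strict Implicit. Unset Printing Implicit Defensive.
Import Order.TTheory GRing.Theory Num.Theory.
Local Open Scope ring_scope.

Definition dpow (A : algType rat) (T : A) (m : nat) : A :=
  (m`!%:R : rat)^-1 *: T ^+ m.

Definition binomT (A : algType rat) (T : A) (m : nat) : A :=
  (m`!%:R : rat)^-1 *: \prod_(i < m) (T - i%:R).

(* The defining relations of B_d, for elements e f H1 H2 of a Q-algebra A.
   B_d is the universal Q-algebra generated by such elements. *)
Definition Bd_rel (A : algType rat) (d : nat) (e f H1 H2 : A) : Prop :=
  H1 * H2 = H2 * H1 /\
  H1 * e - e * H1 = e /\
  H1 * f - f * H1 = - f /\
  H2 * e - e * H2 = - e /\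
  H2 * f - f * H2 = f /\
  e * f - f * e = H1 - H2 /\
  H1 + H2 = d%:R /\
  \prod_(i < d.+1) (H1 - i%:R) = 0.

From HB Require Import structures.
From mathcomp Require Import all_boot all_order all_algebra.
From mathcomp Require Import zify ring lra.
Set Implicit Arguments. Unset Strict Implicit. Unset Printing Implicit Defensive.
Import Order.TTheory GRing.Theory Num.Theory.
Local Open Scope ring_scope.

(* Since H1 (H1 - 1) ... (H1 - d) = 0, an element of B_d vanishes as soon as it
   kills every weight vector y (H1 y = l y with 0 <= l <= d).  On weight vectors
   e and f shift the weight by +1 and -1, and binom(H2, m) acts by the scalar
   binom(d - l, m).  For s = 1 the identity, with all terms on one side and
   applied to a weight vector y of weight l, becomes binom(D, b) times
     sum_k (-1)^k binom(D + k, k) f^(a-k) e^(c-k) y,   D = d - l - c,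
   and this alternating sum vanishes for a > l, by induction on c using the
   commutation of e past f^(p) (for a <= l every term vanishes already).
   For s > 1 induct on a: left multiplication by f turns the identity for
   (a, b, c) into the one for (a + 1, b, c), except for the term k = s - 1 (with
   s the value for (a + 1, b, c)), which is eliminated by the s = 1 identity for
   (a + 2 - s, b + s - 1, c + 1 - s).  The second identity is the first one for
   the symmetry e <-> f, H1 <-> H2 of the relations. *)

Lemma natr_fact_neq0 n : (n`!%:R : rat) != 0.
Proof. by rewrite pnatr_eq0 -lt0n fact_gt0. Qed.

Lemma inv_fact_succ n : (n`!%:R : rat)^-1 = n.+1%:R * (n.+1`!%:R)^-1.
Proof. by rewrite factS natrM invfM mulrA divff ?mul1r ?pnatr_eq0. Qed.

Lemma mulr_nat_scale (A : algType rat) n (y : A) : n%:R * y = (n%:R : rat) *: y.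
Proof. by rewrite mulr_natl scaler_nat. Qed.

Lemma prod_subn_nat (k b : nat) : \prod_(i < b) (k%:R - i%:R : rat) = (k ^_ b)%:R.
Proof.
elim: b => [|b IH]; first by rewrite big_ord0 ffactn0.
rewrite big_ord_recr /= IH ffactnSr natrM.
by case: (leqP b k) => h; [rewrite natrB | rewrite ffact_small // !mul0r].
Qed.

Section DividedPowers.
Variable A : algType rat.
Implicit Types T : A.

Lemma dpow0 T : dpow T 0 = 1.
Proof. by rewrite /dpow fact0 expr0 invr1 scale1r. Qed.

Lemma mul_dpow T n : T * dpow T n = n.+1%:R *: dpow T n.+1.
Proof. by rewrite /dpow -scalerAr -exprS scalerA -inv_fact_succ. Qed.

Lemma dpow_mul T n : dpow T n * T = n.+1%:R *: dpow T n.+1.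
Proof. by rewrite /dpow -scalerAl -exprSr scalerA -inv_fact_succ. Qed.

End DividedPowers.

Section Eigenvectors.
Variable A : algType rat.
Implicit Types (T y : A).

Lemma prod_subn_eigen {T y} {m : rat} : T * y = m *: y -> forall n,
  (\prod_(i < n) (T - i%:R)) * y = (\prod_(i < n) (m - i%:R)) *: y.
Proof.
move=> hT; elim=> [|n IH]; first by rewrite !big_ord0 mul1r scale1r.
rewrite !big_ord_recr /= -mulrA mulrBl hT mulr_nat_scale -scalerBl -scalerAr IH.
by rewrite scalerA mulrC.
Qed.

Lemma binomT_eigen T (k : nat) y b : T * y = k%:R *: y ->
  binomT T b * y = 'C(k, b)%:R *: y.
Proof.
move=> hT; rewrite /binomT -scalerAl (prod_subn_eigen hT) scalerA prod_subn_nat.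
by rewrite -bin_ffact natrM mulrC mulfK // natr_fact_neq0.
Qed.

Lemma eigen_eq0 T d (m : rat) y : \prod_(i < d.+1) (T - i%:R) = 0 -> T * y = m *: y ->
  (forall i : nat, (i <= d)%N -> m != i%:R) -> y = 0.
Proof.
move=> hT hy hm.
have : \prod_(i < d.+1) (m - i%:R) != 0.
  by apply/prodf_neq0 => i _; rewrite subr_eq0 hm // -ltnS.
have := prod_subn_eigen hy d.+1; rewrite hT mul0r => /esym /eqP.
by rewrite scaler_eq0 => /orP [/eqP -> | /eqP].
Qed.

Lemma horner_alg_XsubC T (x : nat) : horner_alg T ('X - x%:R) = T - x%:R.
Proof. by rewrite rmorphB /= horner_algX rmorph_nat. Qed.

Lemma eq0_of_eigenvectors T (Z : A) d : \prod_(i < d.+1) (T - i%:R) = 0 ->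
  (forall (m : nat) y, (m <= d)%N -> T * y = m%:R *: y -> Z * y = 0) -> Z = 0.
Proof.
move=> hT hZ.
(* [gap m n] omits the roots m, ..., m + n - 1; Z kills [gap m n] for n > 0 by
   induction on n, since restoring the root m or the root m + n to [gap m n.+1]
   gives two products killed by Z whose difference is n times [gap m n.+1]. *)
pose gap m n := horner_alg T (\prod_(i < d.+1 | ~~ (m <= i < m + n)%N) ('X - (i : nat)%:R)).
have gap_fill m n (j : 'I_d.+1) m' : (j == m :> nat) || (j == m + n :> nat) ->
    (forall i : 'I_d.+1, ~~ (m' <= i < m' + n)%N = ~~ (m <= i < m + n.+1)%N || (i == j :> nat)) ->
    (T - (j : nat)%:R) * gap m n.+1 = gap m' n.
  move=> hj hgap; rewrite /gap -horner_alg_XsubC -rmorphM [in RHS](bigD1 j) /=; last first.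
    by rewrite hgap eqxx orbT.
  congr (horner_alg T (_ * _)); apply: eq_bigl => i; rewrite hgap -val_eqE.
  by case: eqP => [-> | _]; rewrite ?andbF ?orbF ?andbT //=; move: hj; lia.
have kill n m : (0 < n)%N -> (m + n <= d.+1)%N -> Z * gap m n = 0.
  elim: n m => [//|[|n] IH] m _ hmn.
    have hm : (m < d.+1)%N by lia.
    apply: (hZ m); first by lia.
    apply/eqP; rewrite -subr_eq0 -mulr_nat_scale -mulrBl.
    rewrite (gap_fill m 0%N (Ordinal hm) m.+1) ?eqxx //=; last by move=> i; lia.
    rewrite /gap rmorph_prod -hT; apply/eqP; rewrite (eq_bigl xpredT); last by move=> i; lia.
    by apply: eq_bigr => i _; rewrite rmorphB /= horner_algX rmorph_nat.
  have hl : (m < d.+1)%N by lia.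
  have hr : (m + n.+1 < d.+1)%N by lia.
  have hn : (n.+1%:R : rat) != 0 by rewrite pnatr_eq0.
  apply: (scalerI hn); rewrite scaler0 scalerAr -mulr_nat_scale.
  have -> : n.+1%:R = (T - m%:R) - (T - (m + n.+1)%:R).
    by rewrite opprB addrC addrA subrK -natrB ?leq_addr // addKn.
  rewrite mulrBl mulrBr (gap_fill m n.+1 (Ordinal hl) m.+1) ?eqxx //; last by move=> i /=; lia.
  rewrite (gap_fill m n.+1 (Ordinal hr) m) ?eqxx ?orbT //=; last by move=> i /=; lia.
  by rewrite !IH ?subrr //; lia.
have := kill d.+1 0%N isT (leqnn _).
by rewrite /gap big_pred0 ?rmorph1 ?mulr1 // => i; rewrite add0n ltn_ord.
Qed.

End Eigenvectors.

(* [T^(p - k)] for integer [p - k], hence [0] when [k > p] rather than [T^0]. *)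
Definition dpowB (A : algType rat) (T : A) (p k : nat) : A :=
  if (k <= p)%N then dpow T (p - k) else 0.

Section TruncatedDividedPowers.
Variables (A : algType rat) (T : A).

Lemma dpowB0 p : dpowB T p 0 = dpow T p.
Proof. by rewrite /dpowB subn0. Qed.

Lemma dpowBSS p k : dpowB T p.+1 k.+1 = dpowB T p k.
Proof. by rewrite /dpowB ltnS subSS. Qed.

Lemma dpowB_gt p k : (p < k)%N -> dpowB T p k = 0.
Proof. by rewrite /dpowB ltnNge => /negbTE ->. Qed.

Lemma dpowB_shift p t k : (t <= p)%N -> dpowB T (p - t) k = dpowB T p (k + t).
Proof.
move=> h; rewrite /dpowB (_ : (k <= p - t)%N = (k + t <= p)%N); last by lia.
by case: ifP => // _; congr dpow; lia.
Qed.

Lemma mul_dpowB c k : T * dpowB T c k = (c.+1%:R - k%:R) *: dpowB T c.+1 k.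
Proof.
rewrite /dpowB; case: (leqP k c) => h; first by rewrite (leqW h) mul_dpow -subSn // natrB // leqW.
rewrite mulr0; case: (eqVneq k c.+1) => [-> | hk]; first by rewrite subrr scale0r.
by rewrite leqNgt (_ : (c.+1 < k)%N) ?scaler0 //; lia.
Qed.

Lemma dpowB_mul c k : dpowB T c k * T = (c.+1%:R - k%:R) *: dpowB T c.+1 k.
Proof.
rewrite /dpowB; case: (leqP k c) => h; first by rewrite (leqW h) dpow_mul -subSn // natrB // leqW.
rewrite mul0r; case: (eqVneq k c.+1) => [-> | hk]; first by rewrite subrr scale0r.
by rewrite leqNgt (_ : (c.+1 < k)%N) ?scaler0 //; lia.
Qed.

End TruncatedDividedPowers.

Lemma alt_binom_step (D r c j : nat) :
  ((D.+1 + r) * c.+1)%:R * ((-1) ^+ j.+1 * 'C(D + j.+1, j.+1)%:R) =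
  D.+1%:R * ((-1) ^+ j.+1 * 'C(D.+1 + j.+1, j.+1)%:R * (c.+1%:R - j.+1%:R)
            + (-1) ^+ j * 'C(D.+1 + j, j)%:R * (c%:R - j%:R - D.+1%:R - r%:R))
  + r%:R * ((-1) ^+ j.+1 * 'C(D + j.+1, j.+1)%:R * (c.+1%:R - j.+1%:R)) :> rat.
Proof.
have hD : (D.+1%:R : rat) != 0 by rewrite pnatr_eq0.
have bin_top : 'C(D.+1 + j.+1, j.+1)%:R = (D.+1 + j.+1)%:R * 'C(D + j.+1, j.+1)%:R / D.+1%:R :> rat.
  apply: (canRL (mulfK hD)); rewrite -!natrM; congr _%:R.
  have := mul_bin_down (D.+1 + j.+1) j.+1; rewrite addSn /= => ->.
  by rewrite mulnC; congr (_ * _)%N; lia.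
have bin_bottom : 'C(D.+1 + j, j)%:R = j.+1%:R * 'C(D + j.+1, j.+1)%:R / D.+1%:R :> rat.
  apply: (canRL (mulfK hD)); rewrite -!natrM; congr _%:R.
  by rewrite addSnnS mul_bin_left mulnC; congr (_ * _)%N; lia.
by rewrite bin_top bin_bottom exprS !natrD natrM; field; rewrite nat1r.
Qed.

Lemma bin_mul_bin n m j : (j <= m)%N -> (m <= n)%N ->
  ('C(n, m) * 'C(m, j) = 'C(n, j) * 'C(n - j, m - j))%N.
Proof.
move=> hjm hmn; apply/eqP.
rewrite -(eqn_pmul2r (_ : 0 < j`! * (m - j)`! * (n - m)`!)%N); last by rewrite !muln_gt0 !fact_gt0.
apply/eqP; transitivity n`!.
  transitivity ('C(n, m) * ('C(m, j) * (j`! * (m - j)`!)) * (n - m)`!)%N; first by ring.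
  by rewrite bin_fact // -mulnA bin_fact.
have hjn : (j <= n)%N := leq_trans hjm hmn.
have -> : (n - m = n - j - (m - j))%N by lia.
rewrite -(bin_fact hjn) -(bin_fact (leq_sub2r j hmn)).
by set x := 'C(n - j, m - j); set y := (n - j - (m - j))`!; set z := (m - j)`!; ring.
Qed.

Definition coef (s b k : nat) : rat := (-1) ^+ (k - s) * 'C(k.-1, s.-1)%:R * 'C(b + k, k)%:R.

Lemma coef_recurrence a b t k : (0 < t)%N -> (t < k)%N ->
  coef t b k * (a.+1%:R - k%:R)
    - coef t b t * (a.+1%:R - t%:R) * ((-1) ^+ (k - t) * 'C(b + k, k - t)%:R)
  = a.+1%:R * coef t.+1 b k.
Proof.
case: t => [//|u] _ /subnKC <-; move: (k - u.+2)%N => j.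
have hV : 'C(b + u.+1, u.+1)%:R != 0 :> rat by rewrite pnatr_eq0 -lt0n bin_gt0 leq_addl.
have hW : ('C(b + u.+1, u.+1) * 'C(b + (u.+2 + j), j.+1)
           = 'C(b + (u.+2 + j), u.+2 + j) * ('C(u.+1 + j, u.+1) + 'C(u.+1 + j, u)))%N.
  have h1 : (j.+1 <= u.+2 + j)%N by lia.
  have e1 : (b + (u.+2 + j) - j.+1 = b + u.+1)%N by lia.
  have e2 : (u.+2 + j - j.+1 = u.+1)%N by lia.
  rewrite mulnC; have := bin_mul_bin h1 (leq_addl b _); rewrite e1 e2 => <-; congr (_ * _)%N.
  by rewrite -bin_sub // e2 addSn binS.
have hX : (j.+1 * 'C(u.+1 + j, u) = u.+1 * 'C(u.+1 + j, u.+1))%N.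
  by rewrite mul_bin_left; congr (_ * _)%N; lia.
rewrite /coef (_ : (u.+2 + j - u.+1 = j.+1)%N) ?addKn ?subnn; last by lia.
rewrite (_ : (u.+2 + j).-1 = u.+1 + j)%N // !succnK binn expr0 !mul1r exprS.
have -> : 'C(b + (u.+2 + j), j.+1)%:R
    = 'C(b + (u.+2 + j), u.+2 + j)%:R * ('C(u.+1 + j, u.+1)%:R + 'C(u.+1 + j, u)%:R)
      / 'C(b + u.+1, u.+1)%:R :> rat.
  by apply: (canRL (mulfK hV)); rewrite -natrD -!natrM mulnC hW.
have -> : 'C(u.+1 + j, u)%:R = u.+1%:R * 'C(u.+1 + j, u.+1)%:R / j.+1%:R :> rat.
  by apply: (canRL (mulfK _)); rewrite ?pnatr_eq0 // -!natrM mulnC hX.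
by rewrite [(u.+2 + j)%:R]natrD; field; rewrite hV nat1r pnatr_eq0.
Qed.

Lemma sum_scale_shift (V : lmodType rat) (g : nat -> V) (p q : nat -> rat) N : g N = 0 ->
  \sum_(0 <= k < N) p k *: g k + \sum_(0 <= k < N) q k *: g k.+1
  = \sum_(0 <= k < N) (p k + (if k is j.+1 then q j else 0)) *: g k.
Proof.
move=> gN; rewrite (_ : \sum_(0 <= k < N) q k *: g k.+1
    = \sum_(0 <= k < N) (if k is j.+1 then q j else 0) *: g k).
  by rewrite -big_split; apply: eq_bigr => k _; rewrite scalerDl.
case: N gN => [|N] gN; first by rewrite !big_geq.
by rewrite [RHS]big_nat_recl // scale0r add0r big_nat_recr //= gN scaler0 addr0.
Qed.

Section Weights.
Variables (d : nat) (A : algType rat) (e f H1 H2 : A).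
Hypothesis H1e : H1 * e - e * H1 = e.
Hypothesis H1f : H1 * f - f * H1 = - f.
Hypothesis ef : e * f - f * e = H1 - H2.
Hypothesis H1H2 : H1 + H2 = d%:R.
Hypothesis H1_split : \prod_(i < d.+1) (H1 - i%:R) = 0.

Definition weight (l : rat) (y : A) := H1 * y = l *: y.

Lemma weight0 l : weight l 0.
Proof. by rewrite /weight mulr0 scaler0. Qed.

Lemma weightZ l k y : weight l y -> weight l (k *: y).
Proof. by rewrite /weight => hy; rewrite -scalerAr hy !scalerA mulrC. Qed.

Lemma weight_e l y : weight l y -> weight (l + 1) (e * y).
Proof.
rewrite /weight => hy; have he : H1 * e = e + e * H1 by apply/eqP; rewrite -subr_eq H1e.
by rewrite mulrA he mulrDl -mulrA hy -scalerAr scalerDl scale1r addrC.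
Qed.

Lemma weight_f l y : weight l y -> weight (l - 1) (f * y).
Proof.
rewrite /weight => hy; have hf : H1 * f = - f + f * H1 by apply/eqP; rewrite -subr_eq H1f.
by rewrite mulrA hf mulrDl -mulrA hy -scalerAr scalerBl scale1r mulNr addrC.
Qed.

Lemma weight_dpow_e l y n : weight l y -> weight (l + n%:R) (dpow e n * y).
Proof.
move=> hy; rewrite /dpow -scalerAl; apply: weightZ.
elim: n => [|n IH]; first by rewrite expr0 mul1r addr0.
by rewrite exprS -mulrA -addn1 natrD addrA; apply: weight_e.
Qed.

Lemma weight_dpow_f l y n : weight l y -> weight (l - n%:R) (dpow f n * y).
Proof.
move=> hy; rewrite /dpow -scalerAl; apply: weightZ.
elim: n => [|n IH]; first by rewrite expr0 mul1r subr0.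
by rewrite exprS -mulrA -addn1 natrD opprD addrA; apply: weight_f.
Qed.

Lemma weight_dpowB_e l c k y : weight l y ->
  weight (l + c%:R - k%:R) (dpowB e c k * y).
Proof.
move=> hy; case: (leqP k c) => h; last by rewrite dpowB_gt // mul0r; exact: weight0.
by rewrite /dpowB h -addrA -natrB //; apply: weight_dpow_e.
Qed.

Lemma weight_H2 l y : weight l y -> H2 * y = (d%:R - l) *: y.
Proof.
move=> hy; have -> : H2 = d%:R - H1 by rewrite -H1H2 addrAC subrr add0r.
by rewrite mulrBl hy mulr_nat_scale scalerBl.
Qed.

Lemma binomT_H2_weight (w b : nat) y : (w <= d)%N -> weight w%:R y ->
  binomT H2 b * y = 'C(d - w, b)%:R *: y.
Proof. by move=> hw hy; apply: binomT_eigen; rewrite (weight_H2 hy) natrB. Qed.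

Lemma dpow_e_weight_eq0 (l n : nat) y : (d < l + n)%N -> weight l%:R y ->
  dpow e n * y = 0.
Proof.
move=> hd hy; apply: (eigen_eq0 H1_split (weight_dpow_e n hy)) => i hi.
by rewrite -natrD eqr_nat; apply/eqP; lia.
Qed.

Lemma dpow_f_weight_eq0 (l n : nat) y : (l < n)%N -> weight l%:R y ->
  dpow f n * y = 0.
Proof.
move=> hd hy; apply: (eigen_eq0 H1_split (weight_dpow_f n hy)) => i hi.
by rewrite subr_eq -natrD eqr_nat; apply/eqP; lia.
Qed.

Lemma e_f_weight l y : weight l y -> e * (f * y) = f * (e * y) + (2%:R * l - d%:R) *: y.
Proof.
move=> hy; have hef : e * f = (H1 - H2) + f * e by apply/eqP; rewrite -subr_eq ef.
rewrite mulrA hef mulrDl -mulrA mulrBl (weight_H2 hy) hy -scalerBl addrC.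
by congr (_ + _ *: _); ring.
Qed.

Lemma e_dpow_f_weight p l y : weight l y ->
  e * (dpow f p.+1 * y) = dpow f p.+1 * (e * y) + (2%:R * l - d%:R - p%:R) *: (dpow f p * y).
Proof.
move=> hy; elim: p => [|p IH].
  by rewrite /dpow !fact0 invr1 !scale1r expr1 expr0 mul1r (e_f_weight hy) subr0.
have hp : (p.+2%:R : rat) != 0 by rewrite pnatr_eq0.
apply: (scalerI hp).
rewrite scalerAr scalerAl -mul_dpow -mulrA (e_f_weight (weight_dpow_f p.+1 hy)) IH.
rewrite mulrDr -scalerAr !mulrA !mul_dpow -!scalerAl !scalerDr !scalerA -addrA -scalerDl.
by congr (_ + _ *: _); ring.
Qed.

Lemma e_dpowB_f_weight a k l y : weight l y ->
  e * (dpowB f a k * y) = dpowB f a k * (e * y)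
    + (2%:R * l - d%:R - (a%:R - k%:R) + 1) *: (dpowB f a k.+1 * y).
Proof.
move=> hy; case: (ltngtP k a) => h.
- rewrite /dpowB (ltnW h) h -(subnSK h) (e_dpow_f_weight _ hy) subnSK //.
  by congr (_ + _ *: _); rewrite natrB // -addn1 natrD; ring.
- by rewrite !dpowB_gt ?mul0r ?mulr0 ?scaler0 ?addr0 //; lia.
- by rewrite h (dpowB_gt _ (ltnSn a)) /dpowB leqnn subnn dpow0 !mul1r mul0r scaler0 addr0.
Qed.

Lemma e_dpowB_f_e_weight a c k l y : weight l y ->
  e * (dpowB f a k * (dpowB e c k * y))
  = (c.+1%:R - k%:R) *: (dpowB f a k * (dpowB e c.+1 k * y))
    + (2%:R * (l + c%:R - k%:R) - d%:R - (a%:R - k%:R) + 1) *: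
        (dpowB f a k.+1 * (dpowB e c.+1 k.+1 * y)).
Proof.
move=> hy; rewrite (e_dpowB_f_weight _ _ (weight_dpowB_e c k hy)).
by rewrite [e * (_ * y)]mulrA mul_dpowB -scalerAl -scalerAr dpowBSS.
Qed.

Lemma alt_sum_dpowB_f_e_eq0 (c l D a N : nat) y :
  (l + c + D)%N = d -> (l < a < N)%N -> weight l%:R y ->
  \sum_(0 <= k < N) ((-1) ^+ k * 'C(D + k, k)%:R) *: (dpowB f a k * (dpowB e c k * y)) = 0.
Proof.
elim: c l D y => [|c IH] l D y hd /andP[hla haN] hy.
  apply: big1 => -[_ | k _]; last by rewrite (dpowB_gt e (ltn0Sn k)) mul0r mulr0 scaler0.
  by rewrite !dpowB0 dpow0 mul1r (dpow_f_weight_eq0 hla hy) scaler0.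
pose g k := dpowB f a k * (dpowB e c.+1 k * y).
pose r := (a - l.+1)%N.
pose al k : rat := (-1) ^+ k * 'C(D + k, k)%:R.
pose al' k : rat := (-1) ^+ k * 'C(D.+1 + k, k)%:R.
pose u k : rat := c.+1%:R - k%:R.
pose ga k : rat := c%:R - k%:R - D.+1%:R - r%:R.
have gN : g N = 0 by rewrite /g dpowB_gt // mul0r.
(* (D + r + 1) (c + 1) times the sum is, coefficientwise by [alt_binom_step],
   D + 1 times e applied to the instance (c, D + 1, y) of the induction
   hypothesis plus r times its instance (c, D, e y). *)
have R1 : \sum_(0 <= k < N) (al' k * u k + (if k is j.+1 then al' j * ga j else 0)) *: g k = 0.
  have hd' : (l + c + D.+1)%N = d by lia.
  have := congr1 (GRing.mul e) (IH l D.+1 y hd' (introT andP (conj hla haN)) hy).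
  rewrite [e * 0]mulr0 mulr_sumr -sum_scale_shift // => E; rewrite -[RHS]E -big_split.
  apply: eq_bigr => k _; rewrite -scalerAr (e_dpowB_f_e_weight _ _ _ hy) scalerDr !scalerA /ga /r.
  by congr (_ + _ *: _); rewrite /al' natrB // -hd !natrD; ring.
have R2 : r%:R *: \sum_(0 <= k < N) (al k * u k) *: g k = 0.
  case hr: r => [|r']; first by rewrite scale0r.
  have hey : weight l.+1%:R (e * y) by rewrite -natr1; apply: weight_e.
  have hd' : (l.+1 + c + D)%N = d by lia.
  have hlaN : (l.+1 < a < N)%N by rewrite haN andbT; lia.
  suff -> : \sum_(0 <= k < N) (al k * u k) *: g k = 0 by rewrite scaler0.
  rewrite -[RHS](IH l.+1 D (e * y) hd' hlaN hey); apply: eq_bigr => k _.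
  by rewrite [dpowB e c k * _]mulrA dpowB_mul -scalerAl -scalerAr scalerA.
have hK : ((D.+1 + r) * c.+1)%:R != 0 :> rat by rewrite pnatr_eq0 muln_eq0 negb_or addSn.
apply: (scalerI hK); rewrite scaler0.
transitivity (D.+1%:R *: \sum_(0 <= k < N)
                 (al' k * u k + (if k is j.+1 then al' j * ga j else 0)) *: g k
              + r%:R *: \sum_(0 <= k < N) (al k * u k) *: g k).
  2: by rewrite R1 R2 scaler0 addr0.
rewrite !scaler_sumr -big_split; apply: eq_bigr => -[|j] _; rewrite /= !scalerA -scalerDl.
  by congr (_ *: _); rewrite /al /al' /u !addn0 !bin0 expr0 subr0 natrM natrD; ring.
by congr (_ *: _); rewrite alt_binom_step /al /al' /u /ga; ring.
Qed.

Lemma alt_sum_f_binomT_e_weight_eq0 (a b c l N : nat) y :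
  (a + b + c)%N = d.+1 -> (a < N)%N -> weight l%:R y ->
  \sum_(0 <= k < N) ((-1) ^+ k * 'C(b + k, k)%:R) *:
     (dpowB f a k * (binomT H2 (b + k) * (dpowB e c k * y))) = 0.
Proof.
move=> habc haN hy.
have weight_ek k : (k <= c)%N -> weight (l + (c - k))%:R (dpowB e c k * y).
  by move=> hkc; have := weight_dpowB_e c k hy; rewrite -addrA -natrB // -natrD.
case: (leqP a l) => hal.
  apply: big1 => k _; case: (leqP k c) => hkc.
    2: by rewrite (dpowB_gt e hkc) !mul0r !mulr0 scaler0.
  case: (leqP (l + (c - k)) d) => hw; last first.
    by rewrite /dpowB hkc (dpow_e_weight_eq0 hw hy) !mulr0 scaler0.
  rewrite (binomT_H2_weight _ hw (weight_ek k hkc)) (@bin_small (d - _) (b + k)); last by lia.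
  by rewrite scale0r mulr0 scaler0.
pose D := (d - l - c)%N.
have hD : (l + c + D)%N = d by rewrite /D; lia.
transitivity ('C(D, b)%:R *: \sum_(0 <= k < N) ((-1) ^+ k * 'C(D + k, k)%:R) *:
    (dpowB f a k * (dpowB e c k * y))); last first.
  by rewrite (alt_sum_dpowB_f_e_eq0 hD) ?hal ?haN ?scaler0.
rewrite scaler_sumr; apply: eq_bigr => k _.
case: (leqP k c) => hkc; last by rewrite (dpowB_gt e hkc) !mul0r !mulr0 !scaler0.
have hw : (l + (c - k) <= d)%N by lia.
rewrite (binomT_H2_weight _ hw (weight_ek k hkc)) -scalerAr !scalerA.
congr (_ *: _); rewrite (_ : (d - (l + (c - k)) = D + k)%N); last by rewrite /D; lia.
have hbD : (b + k <= D + k)%N by rewrite /D; lia.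
by rewrite -mulrA -natrM mulnC (bin_mul_bin (leq_addl b k) hbD) !addnK natrM; ring.
Qed.

Definition fHe (a b c k : nat) : A := dpowB f a k * binomT H2 (b + k) * dpowB e c k.

Lemma fHe_eq0 a b c k : (a < k)%N || (c < k)%N -> fHe a b c k = 0.
Proof. by rewrite /fHe => /orP[h | h]; rewrite ?(dpowB_gt f h) ?(dpowB_gt e h) ?mul0r ?mulr0. Qed.

Lemma f_fHe a b c k : f * fHe a b c k = (a.+1%:R - k%:R) *: fHe a.+1 b c k.
Proof. by rewrite /fHe !mulrA mul_dpowB -!scalerAl. Qed.

Lemma fHe_shift a b c t k : (t <= a)%N -> (t <= c)%N ->
  fHe (a - t) (b + t) (c - t) k = fHe a b c (k + t).
Proof. by move=> ha hc; rewrite /fHe !dpowB_shift // addnAC addnA. Qed.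

Lemma binomT_H2_dpow_e_eq0 b c : (d < b + c)%N -> binomT H2 b * dpow e c = 0.
Proof.
move=> hbc; apply: (eq0_of_eigenvectors H1_split) => l y hl hy; rewrite -mulrA.
case: (leqP (l + c) d) => hw; last by rewrite (dpow_e_weight_eq0 hw hy) mulr0.
rewrite (binomT_H2_weight _ hw); last by rewrite natrD; apply: weight_dpow_e.
by rewrite bin_small ?scale0r //; lia.
Qed.

Lemma alt_sum_fHe_eq0 a b c N : (a + b + c)%N = d.+1 -> (a < N)%N ->
  \sum_(0 <= k < N) ((-1) ^+ k * 'C(b + k, k)%:R) *: fHe a b c k = 0.
Proof.
move=> habc haN; apply: (eq0_of_eigenvectors H1_split) => l y _ hy.
rewrite mulr_suml -[RHS](alt_sum_f_binomT_e_weight_eq0 habc haN hy).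
by apply: eq_bigr => k _; rewrite -scalerAl /fHe !mulrA.
Qed.

Lemma alt_sum_fHe_shift_eq0 a b c t N : (a + b + c)%N = (d.+1 + t)%N ->
  (t <= a)%N -> (t <= c)%N -> (a < N)%N ->
  \sum_(t <= k < N) ((-1) ^+ (k - t) * 'C(b + k, k - t)%:R) *: fHe a b c k = 0.
Proof.
move=> habc hta htc haN.
have habc' : (a - t + (b + t) + (c - t))%N = d.+1 by lia.
have haN' : (a - t < N - t)%N by lia.
rewrite -[RHS](alt_sum_fHe_eq0 habc' haN').
rewrite -{1}(add0n t) big_addn; apply: eq_bigr => k _.
by rewrite fHe_shift // addnK addnAC addnA.
Qed.

Lemma fHe0_expansion_s1 a b c N : (a + b + c)%N = d.+1 -> (a < N)%N ->
  fHe a b c 0 = \sum_(1 <= k < N) coef 1 b k *: fHe a b c k.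
Proof.
move=> habc haN; have := alt_sum_fHe_eq0 habc haN.
rewrite big_ltn ?(leq_ltn_trans (leq0n a)) // expr0 mul1r addn0 bin0 scale1r.
move=> /eqP; rewrite addr_eq0 => /eqP ->; rewrite -sumrN.
apply: eq_big_nat => k /andP[hk _].
by rewrite /coef subn1 bin0 mulr1 -scaleNr -mulNr -{1}(prednK hk) exprS mulN1r opprK.
Qed.

Lemma fHe0_expansion_step a b c t N :
  (a.+1 + b + c)%N = (d.+1 + t)%N -> (0 < t)%N -> (a.+1 < N)%N ->
  fHe a b c 0 = \sum_(t <= k < N) coef t b k *: fHe a b c k ->
  fHe a.+1 b c 0 = \sum_(t.+1 <= k < N) coef t.+1 b k *: fHe a.+1 b c k.
Proof.
move=> habc ht haN IH.
have ha1 : (a.+1%:R : rat) != 0 by rewrite pnatr_eq0.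
apply: (scalerI ha1); rewrite scaler_sumr.
have -> : a.+1%:R *: fHe a.+1 b c 0
    = \sum_(t <= k < N) (coef t b k * (a.+1%:R - k%:R)) *: fHe a.+1 b c k.
  have := congr1 (GRing.mul f) IH; rewrite f_fHe subr0 mulr_sumr => ->.
  by apply: eq_bigr => k _; rewrite -scalerAr f_fHe scalerA.
have [/andP[hta htc] | hbig] := boolP ((t <= a.+1) && (t <= c))%N; last first.
  have hG k : (t <= k)%N -> fHe a.+1 b c k = 0 by move=> hk; apply: fHe_eq0; lia.
  rewrite big_nat_cond [RHS]big_nat_cond !big1 // => k /andP[/andP[hk _] _].
    by rewrite hG ?scaler0 ?scalerA // ltnW.
  by rewrite hG ?scaler0.
have htN : (t < N)%N by lia.
have := alt_sum_fHe_shift_eq0 habc hta htc haN.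
rewrite big_ltn // subnn expr0 mul1r bin0 scale1r => /eqP; rewrite addr_eq0 => /eqP Gt.
rewrite big_ltn // Gt scalerN -scaleNr scaler_sumr -big_split /=.
apply: eq_big_nat => k /andP[hk _]; rewrite !scalerA -scalerDl; congr (_ *: _).
by rewrite -coef_recurrence //; ring.
Qed.

Lemma fHe0_expansion a b c N : (d < a + b + c)%N -> (a < N)%N ->
  fHe a b c 0 = \sum_(a + b + c - d <= k < N) coef (a + b + c - d) b k *: fHe a b c k.
Proof.
elim: a b c N => [|a IH] b c N hd haN.
  rewrite {1}/fHe !dpowB0 dpow0 mul1r addn0 binomT_H2_dpow_e_eq0 //.
  apply/esym/big1_seq => k /andP[_]; rewrite mem_index_iota => /andP[hk _].
  by rewrite fHe_eq0 ?scaler0 //; lia.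
have [hs1 | hs] := eqVneq (a.+1 + b + c - d)%N 1%N.
  by rewrite hs1; apply: fHe0_expansion_s1 => //; lia.
have hd' : (d < a + b + c)%N by lia.
have -> : (a.+1 + b + c - d = (a + b + c - d).+1)%N by lia.
by apply: fHe0_expansion_step (IH b c N hd' (ltnW haN)) => //; lia.
Qed.

End Weights.

Lemma prod_reflect (A : algType rat) (T : A) d :
  \prod_(i < d.+1) (d%:R - T - i%:R) = (-1) ^+ d.+1 * \prod_(i < d.+1) (T - i%:R).
Proof.
have reflect_poly : \prod_(i < d.+1) (d%:R - 'X - i%:R : {poly rat})
    = (-1) ^+ d.+1 * \prod_(i < d.+1) ('X - i%:R).
  rewrite (reindex_inj rev_ord_inj) /= -[X in (-1) ^+ X]card_ord -prodrN.
  apply: eq_bigr => i _; rewrite subSS natrB; last by have := ltn_ord i; lia.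
  by ring.
transitivity (horner_alg T (\prod_(i < d.+1) (d%:R - 'X - i%:R))).
  by rewrite rmorph_prod; apply: eq_bigr => i _; rewrite !rmorphB /= horner_algX !rmorph_nat.
rewrite reflect_poly rmorphM rmorph_sign rmorph_prod; congr (_ * _).
by apply: eq_bigr => i _; rewrite rmorphB /= horner_algX rmorph_nat.
Qed.

Lemma Bd_rel_swap d (A : algType rat) (e f H1 H2 : A) :
  Bd_rel d e f H1 H2 -> Bd_rel d f e H2 H1.
Proof.
case=> [H12 [H1e [H1f [H2e [H2f [ef [H1H2 H1_split]]]]]]].
do 5 (split; first by []).
split; first by rewrite -opprB ef opprB.
split; first by rewrite addrC.
have -> : H2 = d%:R - H1 by rewrite -H1H2 addrAC subrr add0r.
by rewrite prod_reflect H1_split mulr0.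
Qed.

Lemma dpow_binomT_dpow_expansion d a b c (A : algType rat) (e f H1 H2 : A) :
  Bd_rel d e f H1 H2 -> (d < a + b + c)%N ->
  dpow f a * binomT H2 b * dpow e c =
    \sum_((a + b + c - d)%N <= k < (minn a c).+1) coef (a + b + c - d) b k *:
      (dpow f (a - k) * binomT H2 (b + k) * dpow e (c - k)).
Proof.
case=> [_ [H1e [H1f [_ [_ [ef [H1H2 H1_split]]]]]]] hd.
have := fHe0_expansion H1e H1f ef H1H2 H1_split hd (ltnSn a).
rewrite {1}/fHe !dpowB0 addn0 => ->.
rewrite (@big_nat_widen _ _ _ _ (minn a c).+1 a.+1) ?ltnS ?geq_minl // [RHS]big_mkcond /=.
apply: eq_big_nat => k _; case: ifP => [hk | /negbT hk].
  have [hka hkc] : (k <= a)%N /\ (k <= c)%N by lia.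
  by rewrite /fHe /dpowB hka hkc.
by rewrite fHe_eq0 ?scaler0 //; lia.
Qed.

Theorem theorem6p2 (d a b c : nat) (A : algType rat) (e f H1 H2 : A) :
  Bd_rel d e f H1 H2 ->
  (d < a + b + c)%N ->
  let s := (a + b + c - d)%N in
  dpow f a * binomT H2 b * dpow e c =
    \sum_(s <= k < (minn a c).+1)
      ((-1) ^+ (k - s) * ('C(k.-1, s.-1))%:R * ('C(b + k, k))%:R) *:
        (dpow f (a - k) * binomT H2 (b + k) * dpow e (c - k))
  /\
  dpow e a * binomT H1 b * dpow f c =
    \sum_(s <= k < (minn a c).+1)
      ((-1) ^+ (k - s) * ('C(k.-1, s.-1))%:R * ('C(b + k, k))%:R) *:
        (dpow e (a - k) * binomT H1 (b + k) * dpow f (c - k)).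
Proof.
move=> hrel hd s; split; first exact: dpow_binomT_dpow_expansion hrel hd.
exact: (dpow_binomT_dpow_expansion (Bd_rel_swap hrel) hd).
Qed.
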